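(* Let $0\le k,l\le N$ be integers, let $q$ be a nonzero complex number with $q^j\ne1$ for $1\le j\le N$, and let $t\neq0$. Then $$\binom{N}{l}_q\,t^{k}\;{}_3\phi_2\!\left[\begin{matrix}q^{-k},q^{-l},1/t\\ q^{-N},0\end{matrix};q,q\right]=\sum_{P}q^{\|P\|}\,t^{y_k(P)},$$ where the sum is over all lattice paths $P$ from $(0,0)$ to $(l,N-l)$ with unit right and up steps, $\|P\|$ is the sum, over all up steps of $P$, of the $x$-coordinate of the starting point of that step (the number of boxes to the upper left of the path), and $y_k(P)$ is the number of up steps among the first $k$ steps of $P$.
   Context: $(a;q)_k=\prod_{j=0}^{k-1}(1-aq^j)$, $\binom{N}{l}_q=\frac{(q;q)_N}{(q;q)_l(q;q)_{N-l}}$, and ${}_3\phi_2\!\left[\begin{matrix}a_1,a_2,a_3\\ b_1,b_2\end{matrix};q,z\right]=\sum_{j\ge0}\frac{(a_1,a_2,a_3;q)_j}{(q,b_1,b_2;q)_j}z^j$ (terminating; $(0;q)_j=1$). *)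

From HB Require Import structures.
From mathcomp Require Import all_boot all_order all_algebra.
From mathcomp Require Import complex.
From mathcomp Require Import reals.
Set Implicit Arguments. Unset Strict Implicit. Unset Printing Implicit Defensive.
Import Order.TTheory GRing.Theory Num.Theory.
Local Open Scope ring_scope.

Definition qpoch (F : fieldType) (a q : F) (k : nat) : F :=
  \prod_(j < k) (1 - a * q ^+ j).

Definition qbinom (F : fieldType) (q : F) (N l : nat) : F :=
  qpoch q q N / (qpoch q q l * qpoch q q (N - l)%N).

Definition phi32 (F : fieldType) (M : nat) (a1 a2 a3 b1 b2 q z : F) : F :=
  \sum_(j < M.+1) (qpoch a1 q j * qpoch a2 q j * qpoch a3 q j)
                   / (qpoch q q j * qpoch b1 q j * qpoch b2 q j) * z ^+ j.

(* Lattice paths from (0,0) with N unit steps, encoded as N.-tuple bool: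
   true = right step, false = up step.  Paths ending at (l, N-l) are those
   with exactly l right steps. *)
Definition path_end_ok (N l : nat) (P : N.-tuple bool) : bool :=
  count id P == l.

Definition path_area (N : nat) (P : N.-tuple bool) : nat :=
  \sum_(i < N | ~~ tnth P i) count id (take i P).

Definition path_yk (N : nat) (k : nat) (P : N.-tuple bool) : nat :=
  count negb (take k P).

From HB Require Import structures.
From mathcomp Require Import all_boot all_order all_algebra zify ring.
From mathcomp Require Import complex reals.
Set Implicit Arguments. Unset Strict Implicit. Unset Printing Implicit Defensive.
Import Order.TTheory GRing.Theory Num.Theory.
Local Open Scope ring_scope.

(* Both sides satisfy the same q-Pascal recursion in N, for N >= k.  Splitting
   a path by its last step gives S_(N+1)(l) = S_N(l-1) + q^l S_N(l): an up step
   taken after l right steps adds l to the area, and y_k only sees the first k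
   steps.  Clearing denominators turns the 3phi2 side into a finite sum of
   products [k j]_q [N-j, l-j]_q t^(k-j) (t-1)(t-q)...(t-q^(j-1)), and q-Pascal
   on [N-j, l-j]_q yields the same recursion.  At N = k, y_k counts all up
   steps, so the path side is t^(k-l) [k l]_q, and the 3phi2 side collapses to
   the same value by the expansion
     1 = sum_j (-1)^j q^(C(j,2) + j - nj) [n j]_q t^(n-j) prod_(i<j) (t - q^i). *)

Lemma count_rcons (T : Type) (a : pred T) (s : seq T) (x : T) :
  count a (rcons s x) = (count a s + a x)%N.
Proof. by rewrite -cats1 count_cat /= addn0. Qed.

Lemma sum_tuple_rcons (T : finType) (V : nmodType) (N : nat)
    (f : N.+1.-tuple T -> V) :
  \sum_(P : N.+1.-tuple T) f P =
  \sum_(P : N.-tuple T) \sum_(x : T) f (rcons_tuple P x).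
Proof.
rewrite pair_bigA /= (reindex (fun Px : N.-tuple T * T => rcons_tuple Px.1 Px.2)) //.
apply: onW_bij; apply: inj_card_bij.
  by move=> [P x] [P' x'] /(congr1 val) /rcons_inj [/val_inj -> ->].
by rewrite card_prod !card_tuple expnS mulnC.
Qed.

Section QIdentities.
Variables (F : fieldType) (q : F).

(* The q-analogue of m (m-1) ... (m-j+1); it vanishes for j > m through the
   factor 1 - q ^+ 0. *)
Definition qfall (m j : nat) : F := \prod_(i < j) (1 - q ^+ (m - i)).
Definition qfact (n : nat) : F := qfall n n.
Definition qbin (n m : nat) : F := qfall n m / qfact m.

Lemma qfall0 m : qfall m 0 = 1.
Proof. by rewrite /qfall big_ord0. Qed.

Lemma qfallS m j : qfall m j.+1 = qfall m j * (1 - q ^+ (m - j)).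
Proof. by rewrite /qfall big_ord_recr. Qed.

Lemma qfallSS m j : qfall m.+1 j.+1 = (1 - q ^+ m.+1) * qfall m j.
Proof. by rewrite /qfall big_ord_recl subn0. Qed.

Lemma qfall_eq0 m j : (m < j)%N -> qfall m j = 0.
Proof.
move=> hmj; rewrite /qfall (bigD1 (Ordinal hmj)) //=.
by rewrite subnn expr0 subrr mul0r.
Qed.

Lemma qfallD n a b : qfall n (a + b) = qfall n a * qfall (n - a) b.
Proof.
elim: b => [|b IH]; first by rewrite addn0 qfall0 mulr1.
by rewrite addnS !qfallS IH subnDA mulrA.
Qed.

Lemma qfall_split k l j : (j <= l)%N ->
  qfall k l = qfall k j * qfall (k - j) (l - j).
Proof. by move=> hjl; rewrite -qfallD subnKC. Qed.

Lemma qfact_split m j : (j <= m)%N -> qfact m = qfall m j * qfact (m - j).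
Proof. exact: qfall_split. Qed.

Lemma qfactS n : qfact n.+1 = (1 - q ^+ n.+1) * qfact n.
Proof. exact: qfallSS. Qed.

Lemma qbin0 n : qbin n 0 = 1.
Proof. by rewrite /qbin /qfact !qfall0 divr1. Qed.

Lemma qbin_eq0 n m : (n < m)%N -> qbin n m = 0.
Proof. by move=> hnm; rewrite /qbin qfall_eq0 // mul0r. Qed.

Variable d : nat.
Hypothesis q_neq0 : q != 0.
Hypothesis qX_neq1 : forall j : nat, (1 <= j <= d)%N -> q ^+ j != 1.

Lemma subr1qX_neq0 j : (1 <= j <= d)%N -> 1 - q ^+ j != 0.
Proof. by move=> hj; rewrite subr_eq0 eq_sym qX_neq1. Qed.

Lemma qfact_neq0 n : (n <= d)%N -> qfact n != 0.
Proof.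
move=> hn; apply/prodf_neq0 => i _; apply: subr1qX_neq0.
by rewrite subn_gt0 ltn_ord (leq_trans (leq_subr _ _) hn).
Qed.

Lemma qfall_neq0 m j : (j <= m)%N -> (m <= d)%N -> qfall m j != 0.
Proof.
move=> hjm /qfact_neq0; rewrite (qfact_split hjm) mulf_eq0.
by case/norP.
Qed.

Lemma qbinSS n m : (n < d)%N -> qbin n.+1 m.+1 = qbin n m + q ^+ m.+1 * qbin n m.+1.
Proof.
move=> hn; have [hmn|hnm] := leqP m n; last first.
  by rewrite !qbin_eq0 ?mulr0 ?addr0 // ltnW.
have hm : (m < d)%N by apply: leq_ltn_trans hn.
have qX_split : q ^+ n.+1 = q ^+ m.+1 * q ^+ (n - m).
  by rewrite -exprD; congr (_ ^+ _); lia.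
have := qfact_neq0 (ltnW hm); have := @subr1qX_neq0 m.+1 hm.
rewrite /qbin qfallSS qfallS qfactS qX_split => hm1 hfm.
by field; rewrite hm1 hfm.
Qed.

Lemma qbinS_ratio n m : (m < d)%N ->
  (1 - q ^+ m.+1) * qbin n m.+1 = (1 - q ^+ (n - m)) * qbin n m.
Proof.
move=> hm; have := qfact_neq0 (ltnW hm); have := @subr1qX_neq0 m.+1 hm.
rewrite /qbin qfallS qfactS => hm1 hfm.
by field; rewrite hm1 hfm.
Qed.

Lemma qbinSS_dual n m : (n < d)%N ->
  qbin n.+1 m.+1 = qbin n m.+1 + q ^+ (n - m) * qbin n m.
Proof.
move=> hn; have [hmn|hnm] := leqP m n; last first.
  by rewrite !qbin_eq0 ?mulr0 ?addr0 // ltnW.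
rewrite qbinSS //; apply/eqP; rewrite -subr_eq0; apply/eqP.
transitivity ((1 - q ^+ (n - m)) * qbin n m - (1 - q ^+ m.+1) * qbin n m.+1).
  by ring.
by rewrite qbinS_ratio ?subrr // (leq_ltn_trans hmn hn).
Qed.

Variable t : F.

Definition tpoch (n j : nat) : F := t ^+ (n - j) * \prod_(i < j) (t - q ^+ i).

Definition ecoef (n j : nat) : F :=
  (-1) ^+ j * q ^ ('C(j, 2)%:Z - (n * j)%:Z) * qbin n j.

Lemma tpochS_diff n j : (j <= n)%N ->
  tpoch n.+1 j - tpoch n.+1 j.+1 = q ^+ j * tpoch n j.
Proof. by move=> hjn; rewrite /tpoch big_ord_recr /= subSS subSn // exprS; ring. Qed.

Lemma ecoef0 n : ecoef n 0 = 1.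
Proof. by rewrite /ecoef qbin0 muln0 expr0z !mul1r. Qed.

Lemma ecoefSS n j : (n < d)%N ->
  q ^+ j.+1 * ecoef n.+1 j.+1 = ecoef n j.+1 - ecoef n j.
Proof.
move=> hn; have [hjn|hnj] := leqP j n; last first.
  by rewrite /ecoef !qbin_eq0 ?mulr0 ?subr0 // ltnW.
rewrite /ecoef qbinSS_dual // binS bin1.
set e := ('C(j, 2) + j)%:Z - (n * j)%:Z - n%:Z.
have -> : q ^ (('C(j, 2) + j)%:Z - (n.+1 * j.+1)%:Z) = q ^ e / q ^+ j.+1.
  by rewrite exprnN -expfzDr //; congr (_ ^ _); rewrite /e; lia.
have -> : q ^ (('C(j, 2) + j)%:Z - (n * j.+1)%:Z) = q ^ e.
  by congr (_ ^ _); rewrite /e; lia.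
have -> : q ^ ('C(j, 2)%:Z - (n * j)%:Z) = q ^ e * q ^+ (n - j).
  by rewrite exprnP -expfzDr //; congr (_ ^ _); rewrite /e; lia.
by rewrite [(-1) ^+ j.+1]exprS; field; exact: expf_neq0.
Qed.

Lemma sum_ecoef_tpoch n : (n <= d)%N ->
  \sum_(j < n.+1) ecoef n j * q ^+ j * tpoch n j = 1.
Proof.
elim: n => [|n IH] hn.
  by rewrite big_ord1 ecoef0 /tpoch big_ord0 !mul1r.
rewrite -{}IH ?(ltnW hn) //.
under [RHS]eq_bigr => j _.
  rewrite -mulrA -tpochS_diff; last by rewrite -ltnS.
  rewrite mulrBr.
over.
rewrite sumrB big_ord_recl /= ecoef0 expr0 !mul1r.
under eq_bigr => j _ do
  rewrite (_ : bump 0 j = j.+1) // [ecoef _ _ * _]mulrC ecoefSS // mulrBl.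
rewrite sumrB [in RHS]big_ord_recl [X in _ + (X - _) = _]big_ord_recr /=.
rewrite ecoef0 mul1r [ecoef n n.+1]/ecoef qbin_eq0 // !mulr0 mul0r addr0.
by rewrite addrA.
Qed.

Definition qbin_shift (N l j : nat) : F :=
  if (j <= l)%N then qbin (N - j) (l - j) else 0.

Definition hexp (N k l j : nat) : int := ('C(j, 2) + N.+1 * j)%:Z - ((k + l) * j)%:Z.

Definition hterm (N k l j : nat) : F :=
  (-1) ^+ j * q ^ hexp N k l j * qbin k j * qbin_shift N l j.

(* The left-hand side of the theorem as a polynomial in [t]: see [phi32_hsum]. *)
Definition hsum (N k l : nat) : F := \sum_(j < k.+1) hterm N k l j * tpoch k j.

Lemma qbin_shift_eq0 N l j : (l < j)%N -> qbin_shift N l j = 0.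
Proof. by rewrite /qbin_shift ltnNge => /negbTE ->. Qed.

Lemma qbin_shiftSS N l j : (N < d)%N -> (j <= N)%N ->
  qbin_shift N.+1 l.+1 j = qbin_shift N l j + q ^+ (l.+1 - j) * qbin_shift N l.+1 j.
Proof.
move=> hN hjN; rewrite /qbin_shift.
have [hjl|hlj] := leqP j l.
  by rewrite leqW // !subSn // qbinSS // (leq_ltn_trans (leq_subr j N)).
case: ifP => [hjl1|_]; last by rewrite mulr0 addr0.
have -> : j = l.+1 by apply/eqP; rewrite eqn_leq hjl1.
by rewrite subnn !qbin0 expr0 mul1r add0r.
Qed.

Lemma htermSS N k l j : (N < d)%N -> (k <= N)%N ->
  hterm N.+1 k l.+1 j = hterm N k l j + q ^+ l.+1 * hterm N k l.+1 j.
Proof.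
move=> hN hkN; rewrite /hterm.
have [hjk|hkj] := leqP j k; last by rewrite !qbin_eq0 ?(mulr0, mul0r, addr0).
have [hjl|hlj] := leqP j l.+1; last first.
  by rewrite !qbin_shift_eq0 ?(ltnW hlj) ?(mulr0, addr0).
rewrite qbin_shiftSS ?(leq_trans hjk) //.
have -> : hexp N.+1 k l.+1 j = hexp N k l j by rewrite /hexp; lia.
have hexpS : q ^ hexp N k l j * q ^+ (l.+1 - j) = q ^+ l.+1 * q ^ hexp N k l.+1 j.
  by rewrite !exprnP -!expfzDr //; congr (_ ^ _); rewrite /hexp; lia.
transitivity ((-1) ^+ j * qbin k j *
  (q ^ hexp N k l j * qbin_shift N l j +
   (q ^ hexp N k l j * q ^+ (l.+1 - j)) * qbin_shift N l.+1 j)); first by ring.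
by rewrite hexpS; ring.
Qed.

Lemma htermS0 N k j : hterm N.+1 k 0 j = hterm N k 0 j.
Proof.
case: j => [|j]; last by rewrite /hterm !qbin_shift_eq0 // !mulr0.
by rewrite /hterm /hexp /qbin_shift !muln0 !qbin0.
Qed.

Lemma hsumSS N k l : (N < d)%N -> (k <= N)%N ->
  hsum N.+1 k l.+1 = hsum N k l + q ^+ l.+1 * hsum N k l.+1.
Proof.
move=> hN hkN; rewrite /hsum mulr_sumr -big_split /=.
by apply: eq_bigr => j _; rewrite htermSS //; ring.
Qed.

Lemma hsumS0 N k : hsum N.+1 k 0 = hsum N k 0.
Proof. by apply: eq_bigr => j _; rewrite htermS0. Qed.

Lemma qbin_shift_diag k l j : (k <= d)%N ->
  qbin k j * qbin_shift k l j = qbin k l * qbin l j.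
Proof.
move=> hk; have [hkl|hlk] := ltnP k l.
  rewrite [qbin k l]qbin_eq0 // mul0r /qbin_shift.
  have [hjk|hkj] := leqP j k; last by rewrite qbin_eq0 // mul0r.
  by rewrite (leq_trans hjk (ltnW hkl)) [qbin (k - j) _]qbin_eq0 ?mulr0 //; lia.
have [hjl|hlj] := leqP j l; last first.
  by rewrite qbin_shift_eq0 // [qbin l j]qbin_eq0 // !mulr0.
rewrite /qbin_shift hjl /qbin (qfall_split k hjl) (qfact_split hjl).
have hfl := qfall_neq0 hjl (leq_trans hlk hk).
have hfj := qfact_neq0 (leq_trans hjl (leq_trans hlk hk)).
have hflj := qfact_neq0 (leq_trans (leq_subr j l) (leq_trans hlk hk)).
by field; rewrite hfl hfj hflj.
Qed.

Lemma hterm_diag k l j : (k <= d)%N ->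
  hterm k k l j = qbin k l * (ecoef l j * q ^+ j).
Proof.
move=> hk; rewrite /hterm -mulrA qbin_shift_diag // /ecoef.
have -> : hexp k k l j = ('C(j, 2)%:Z - (l * j)%:Z) + j%:Z by rewrite /hexp; lia.
by rewrite expfzDr // -exprnP; ring.
Qed.

Lemma tpoch_shift k l j : (j <= l)%N -> (l <= k)%N ->
  tpoch k j = t ^+ (k - l) * tpoch l j.
Proof. by move=> hjl hlk; rewrite /tpoch mulrA -exprD; congr (_ ^+ _ * _); lia. Qed.

Lemma hsum_diag k l : (k <= d)%N -> hsum k k l = t ^+ (k - l) * qbin k l.
Proof.
move=> hk; rewrite /hsum; under eq_bigr => j _ do rewrite hterm_diag //.
have [hkl|hlk] := ltnP k l.
  by rewrite qbin_eq0 // mulr0 big1 // => j _; rewrite !mul0r.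
rewrite -[RHS]mulr1 -(sum_ecoef_tpoch (leq_trans hlk hk)).
rewrite (big_ord_widen k.+1 (fun j => ecoef l j * q ^+ j * tpoch l j)) //.
rewrite mulr_sumr [RHS]big_mkcond; apply: eq_bigr => j _.
rewrite ltnS; case: leqP => [hjl|hlj]; first by rewrite (tpoch_shift hjl hlk); ring.
by rewrite /ecoef [qbin l j]qbin_eq0 // !(mulr0, mul0r).
Qed.

Definition path_weight (N k : nat) (P : N.-tuple bool) : F :=
  q ^+ path_area P * t ^+ path_yk k P.

Definition path_sum (N k l : nat) : F :=
  \sum_(P : N.-tuple bool | path_end_ok l P) path_weight k P.

Lemma path_area_rcons N (P : N.-tuple bool) b :
  path_area (rcons_tuple P b) = (path_area P + ~~ b * count id P)%N.
Proof.
rewrite /path_area big_mkcond big_ord_recr /= [in RHS]big_mkcond /=.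
congr (_ + _)%N.
  apply: eq_bigr => i _.
  rewrite !(tnth_nth false) /= nth_rcons size_tuple ltn_ord.
  by rewrite -cats1 takel_cat // size_tuple ltnW.
rewrite (tnth_nth false) /= nth_rcons size_tuple ltnn eqxx.
rewrite -cats1 takel_cat ?size_tuple // -{1}(size_tuple P) take_size.
by case: b => /=; rewrite ?mul1n ?mul0n.
Qed.

Lemma path_yk_rcons N k (P : N.-tuple bool) b : (k <= N)%N ->
  path_yk k (rcons_tuple P b) = path_yk k P.
Proof. by move=> hk; rewrite /path_yk /= -cats1 takel_cat // size_tuple. Qed.

Lemma path_weight_rcons N k (P : N.-tuple bool) b : (k <= N)%N ->
  path_weight k (rcons_tuple P b) = q ^+ (~~ b * count id P) * path_weight k P.
Proof.
by move=> hk; rewrite /path_weight path_area_rcons path_yk_rcons // exprD; ring.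
Qed.

Lemma path_sumS N k l : (k <= N)%N ->
  path_sum N.+1 k l =
  (if l is l'.+1 then path_sum N k l' else 0) + q ^+ l * path_sum N k l.
Proof.
move=> hk; rewrite /path_sum /path_end_ok big_mkcond sum_tuple_rcons.
under eq_bigr => P _ do
  rewrite big_bool /= !count_rcons !path_weight_rcons //= mul1n mul0n expr0 mul1r.
rewrite big_split /=; congr (_ + _).
  case: l => [|l]; first by rewrite big1 // => P _; rewrite addn1.
  by rewrite [RHS]big_mkcond; apply: eq_bigr => P _; rewrite addn1 eqSS.
rewrite [in RHS]big_mkcond mulr_sumr; apply: eq_bigr => P _; rewrite addn0.
by case: eqP => [->|_]; rewrite ?mulr0.
Qed.

Lemma path_sum_diag N l : path_sum N N l = t ^+ (N - l) * path_sum N 0 l.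
Proof.
rewrite /path_sum mulr_sumr; apply: eq_bigr => P /eqP hP.
rewrite /path_weight /path_yk take0 take_oversize ?size_tuple //= expr0 mulr1 mulrC.
have hup : (l + count negb P)%N = N.
  by rewrite -hP -[RHS](size_tuple P) -(count_predC id).
by rewrite -[in (N - l)%N]hup addKn.
Qed.

Lemma path_sum0 N l : (N <= d)%N -> path_sum N 0 l = qbin N l.
Proof.
elim: N l => [|N IH] l hN.
  rewrite /path_sum; case: l => [|l].
    rewrite (big_pred1 [tuple]) => [|P]; last by rewrite tuple0 inE eqxx.
    by rewrite qbin0 /path_weight /path_area /path_yk big_ord0 take0 !expr0 mulr1.
  by rewrite qbin_eq0 // big_pred0 // => P; rewrite tuple0.
rewrite path_sumS //; case: l => [|l]; rewrite !IH ?(ltnW hN) //.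
  by rewrite !qbin0 expr0 mul1r add0r.
by rewrite qbinSS.
Qed.

Lemma hsum_path_sum N k l : (N <= d)%N -> (k <= N)%N -> hsum N k l = path_sum N k l.
Proof.
elim: N l => [|N IH] l hN hkN.
  move: hkN; rewrite leqn0 => /eqP ->.
  by rewrite hsum_diag // path_sum_diag path_sum0.
move: hkN; rewrite leq_eqVlt ltnS => /orP [/eqP ->|hkN].
  by rewrite hsum_diag // path_sum_diag path_sum0.
rewrite path_sumS //; case: l => [|l].
  by rewrite hsumS0 IH ?(ltnW hN) // add0r expr0 mul1r.
by rewrite hsumSS // !IH ?(ltnW hN).
Qed.

Lemma qpoch0 j : qpoch 0 q j = 1.
Proof. by rewrite /qpoch big1 // => i _; rewrite mul0r subr0. Qed.

Lemma qpoch_qq j : qpoch q q j = qfact j.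
Proof.
elim: j => [|j IH]; first by rewrite /qpoch big_ord0 /qfact qfall0.
by rewrite /qpoch big_ord_recr /= -/(qpoch q q j) IH qfactS -exprS mulrC.
Qed.

Lemma qpochVX m j :
  qpoch (q ^- m) q j = (-1) ^+ j * q ^ ('C(j, 2)%:Z - (m * j)%:Z) * qfall m j.
Proof.
have [hmj|] := ltnP m j.
  rewrite qfall_eq0 // mulr0 /qpoch (bigD1 (Ordinal hmj)) //=.
  by rewrite mulVf ?expf_neq0 // subrr mul0r.
elim: j => [|j IH] hjm; first by rewrite /qpoch big_ord0 qfall0 muln0 expr0z !mulr1.
have qXmj : q ^ (j%:Z - m%:Z) * q ^+ (m - j) = 1.
  by rewrite exprnP -expfzDr // (_ : _ + _ = 0) ?expr0z //; lia.
have factor : 1 - q ^- m * q ^+ j = - q ^ (j%:Z - m%:Z) * (1 - q ^+ (m - j)).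
  by rewrite mulNr mulrBr mulr1 qXmj exprnN exprnP -expfzDr // opprB (addrC (- m%:Z)).
have -> : q ^ ('C(j.+1, 2)%:Z - (m * j.+1)%:Z) =
          q ^ ('C(j, 2)%:Z - (m * j)%:Z) * q ^ (j%:Z - m%:Z).
  by rewrite -expfzDr //; congr (_ ^ _); rewrite binS bin1; lia.
rewrite /qpoch big_ord_recr /= -/(qpoch _ _ _) (IH (ltnW hjm)) qfallS factor exprS.
by ring.
Qed.

Lemma qpochV_tpoch k j : t != 0 -> (j <= k)%N -> t ^+ k * qpoch t^-1 q j = tpoch k j.
Proof.
move=> ht hjk; rewrite /qpoch /tpoch.
under eq_bigr => i _ do rewrite -[1](mulVf ht) -mulrBr.
rewrite big_split /= prodr_const card_ord mulrA exprVn -{1}(subnK hjk) exprD.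
by rewrite mulfK // expf_neq0.
Qed.

Lemma qbinom_qfall l j : (l <= d)%N -> (j <= d)%N ->
  qbinom q d l * qfall l j / qfall d j = qbin_shift d l j.
Proof.
move=> hl hj; rewrite /qbin_shift /qbinom !qpoch_qq.
have [hjl|hlj] := leqP j l; last by rewrite qfall_eq0 // mulr0 mul0r.
rewrite /qbin (qfact_split hl) (qfall_split d hjl) (qfact_split hjl).
have hfl := qfall_neq0 hjl hl.
have hfd := qfall_neq0 hj (leqnn d).
have hfdl := qfact_neq0 (leq_subr l d).
have hflj := qfact_neq0 (leq_trans (leq_subr j l) hl).
by field; rewrite hfl hfd hfdl hflj.
Qed.

Lemma phi32_hsum k l : t != 0 -> (k <= d)%N -> (l <= d)%N ->
  qbinom q d l * t ^+ k * phi32 d (q ^- k) (q ^- l) t^-1 (q ^- d) 0 q q = hsum d k l.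
Proof.
move=> ht hk hl; rewrite /phi32 /hsum mulr_sumr.
rewrite (big_ord_widen d.+1 (fun j => hterm d k l j * tpoch k j)) // [RHS]big_mkcond.
apply: eq_bigr => -[j hj] _ /=; rewrite ltnS.
have [hjk|hkj] := leqP j k; last by rewrite qpochVX qfall_eq0 // !(mulr0, mul0r).
have hjd : (j <= d)%N by apply: leq_trans hk.
rewrite !qpochVX qpoch_qq qpoch0 mulr1.
set ek := q ^ ('C(j, 2)%:Z - (k * j)%:Z).
set el := q ^ ('C(j, 2)%:Z - (l * j)%:Z).
set ed := q ^ ('C(j, 2)%:Z - (d * j)%:Z).
have hexp_eq : ek * el * q ^+ j = q ^ hexp d k l j * ed.
  by rewrite /ek /el /ed exprnP -!expfzDr //; congr (_ ^ _); rewrite /hexp; lia.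
have hsign : (-1) ^+ j != 0 :> F by rewrite expf_neq0 // oppr_eq0 oner_eq0.
have hed : ed != 0 by apply: expfz_neq0.
have hfj := qfact_neq0 hjd.
have hfd := qfall_neq0 hjd (leqnn d).
transitivity ((-1) ^+ j * (ek * el * q ^+ j / ed) * (qfall k j / qfact j) *
   (qbinom q d l * qfall l j / qfall d j) * (t ^+ k * qpoch t^-1 q j)).
  by field; rewrite hsign hed hfj hfd.
by rewrite hexp_eq mulfK // qbinom_qfall // qpochV_tpoch // /hterm /qbin; ring.
Qed.

End QIdentities.

Theorem mainTheorem11 (R : realType) (N k l : nat) (q t : R[i])
  (hk : (k <= N)%N) (hl : (l <= N)%N)
  (hq0 : q != 0) (hq : forall j : nat, (1 <= j <= N)%N -> q ^+ j != 1)
  (ht : t != 0) :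
  qbinom q N l * t ^+ k *
    phi32 N (q ^- k) (q ^- l) t^-1 (q ^- N) 0 q q
  = \sum_(P : N.-tuple bool | path_end_ok l P)
      q ^+ path_area P * t ^+ path_yk k P.
Proof. by rewrite (phi32_hsum hq0 hq) // (hsum_path_sum hq0 hq). Qed.
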